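(* Let $I$ be the tridendriform ideal of $\mathcal{A}$ generated by $\{x\cdot y: x,y\in\mathcal{A}^+\}$. A tree $t$ of $\mathcal{A}$ is not binary (i.e. some internal vertex has at least three children) if and only if $t\in I$.
   Context: Trees: planar rooted trees in which every internal vertex has at least two children; the root vertex hangs from a trunk edge; leaves are edges without upper vertex; $|$ is the one-leaf tree; $\mathcal A$ is the $\mathbb K$-span of all trees, $\mathcal A^+$ that of trees $\neq|$. Products: $x_0\vee\cdots\vee x_k$ ($k\ge1$) grafts trees left to right on a new root; for $x=x^{(0)}\vee\cdots\vee x^{(k)}$, $y=y^{(0)}\vee\cdots\vee y^{(l)}$: $x\prec y=x^{(0)}\vee\cdots\vee x^{(k-1)}\vee(x^{(k)}*y)$, $x\cdot y=x^{(0)}\vee\cdots\vee x^{(k-1)}\vee(x^{(k)}*y^{(0)})\vee y^{(1)}\vee\cdots\vee y^{(l)}$, $x\succ y=(x*y^{(0)})\vee y^{(1)}\vee\cdots\vee y^{(l)}$, $*=\prec+\cdot+\succ$, $|*z=z*|=z$; for $a\in\mathcal A^+$: $|\prec a=0$, $a\prec|=a$, $|\succ a=a$, $a\succ|=0$, $|\cdot a=a\cdot|=0$. A tridendriform ideal is a subspace $J$ such that $x\ltimes y\in J$ whenever $x\in J$ or $y\in J$, for $\ltimes\in\{\prec,\cdot,\succ\}$; the ideal generated by a set is the smallest tridendriform ideal containing it. *)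

From HB Require Import structures.
From mathcomp Require Import all_boot all_algebra.
From mathcomp Require Import finmap.
From mathcomp.multinomials Require Import monalg.

Set Implicit Arguments.
Unset Strict Implicit.
Unset Printing Implicit Defensive.

Import GRing.Theory.
Local Open Scope ring_scope.

(* Raw planar rooted trees.  [Node [::]] is the one-leaf tree |, and  *)
(* [Node [:: x0; ...; xk]] is x0 \/ ... \/ xk (grafting on a new root).*)
Inductive tree := Node of seq tree.

Notation tleaf := (Node [::]).

Fixpoint tree_enc (t : tree) : GenTree.tree unit :=
  match t with Node ts => GenTree.Node 0 (map tree_enc ts) end.

Fixpoint tree_dec (g : GenTree.tree unit) : tree :=
  match g with
  | GenTree.Leaf _ => Node [::]
  | GenTree.Node _ gs => Node (map tree_dec gs)
  end.

Fixpoint tree_encK (t : tree) : tree_dec (tree_enc t) = t :=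
  match t with
  | Node ts =>
    f_equal Node
      ((fix aux (l : seq tree) : map tree_dec (map tree_enc l) = l :=
          match l with
          | [::] => erefl
          | x :: l' => f_equal2 cons (tree_encK x) (aux l')
          end) ts)
  end.

HB.instance Definition _ := Countable.copy tree (can_type tree_encK).

Fixpoint tsize (t : tree) : nat :=
  match t with Node ts => (sumn (map tsize ts)).+1 end.

Fixpoint valid_tree (t : tree) : bool :=
  match t with Node ts => (size ts != 1%N) && all valid_tree ts end.

Fixpoint has_wide_vertex (t : tree) : bool :=
  match t with Node ts => (2 < size ts)%N || has has_wide_vertex ts end.

Section Ops.
Variable K : fieldType.

(* The K-span of (raw) trees; A is the subspace spanned by valid trees. *)
Definition TA := {malg K[tree]}.

Definition basis (t : tree) : TA := << (1 : K) *g t >>.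

Definition lin_ext (f : tree -> TA) (v : TA) : TA :=
  \sum_(t <- msupp v) v@_t *: f t.

Definition inA (v : TA) : Prop := forall t, t \in msupp v -> valid_tree t.
Definition inAplus (v : TA) : Prop :=
  forall t, t \in msupp v -> valid_tree t /\ t <> tleaf.

(* The three operations on basis trees, computed with fuel n.
   Returns (x < y, x . y, x > y).  Convention for the undefined
   products | op | : value 0 (irrelevant for the statement). *)
Fixpoint ops (n : nat) (x y : tree) : TA * TA * TA :=
  match n with
  | 0%N => (0, 0, 0)
  | n'.+1 =>
    let star a b :=
      match a, b with
      | Node [::], _ => basis b
      | _, Node [::] => basis a
      | _, _ => let: (p, d, s) := ops n' a b in p + d + s
      end in
    match x, y with
    | Node [::], Node [::] => (0, 0, 0)
    | Node [::], _ => (0, 0, basis y)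
    | _, Node [::] => (basis x, 0, 0)
    | Node xs, Node ys =>
      let xk := last tleaf xs in
      let xs'' := behead (belast tleaf xs) in    (* x^(0) .. x^(k-1) *)
      let y0 := head tleaf ys in
      let ys' := behead ys in
      ( lin_ext (fun t => basis (Node (rcons xs'' t))) (star xk y),
        lin_ext (fun t => basis (Node (xs'' ++ t :: ys'))) (star xk y0),
        lin_ext (fun t => basis (Node (t :: ys'))) (star x y0) )
    end
  end.

Definition tprec_t (x y : tree) : TA := (ops (tsize x + tsize y) x y).1.1.
Definition tdot_t  (x y : tree) : TA := (ops (tsize x + tsize y) x y).1.2.
Definition tsucc_t (x y : tree) : TA := (ops (tsize x + tsize y) x y).2.

Definition bilin (f : tree -> tree -> TA) (u v : TA) : TA :=
  \sum_(s <- msupp u) \sum_(t <- msupp v) (u@_s * v@_t) *: f s t.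

Definition tprec := bilin tprec_t.
Definition tdot  := bilin tdot_t.
Definition tsucc := bilin tsucc_t.

Definition tridend_ideal (J : TA -> Prop) : Prop :=
  [/\ (forall v, J v -> inA v),
      J 0,
      (forall u v, J u -> J v -> J (u + v)),
      (forall (c : K) v, J v -> J (c *: v)) &
      (forall x y, J x -> inA y ->
        [/\ J (tprec x y), J (tdot x y), J (tsucc x y),
            J (tprec y x) & J (tdot y x)] /\ J (tsucc y x))].

Definition in_gen_ideal (S : TA -> Prop) (v : TA) : Prop :=
  forall J, tridend_ideal J -> (forall s, S s -> J s) -> J v.

Definition dot_gens (v : TA) : Prop :=
  exists x y, [/\ inAplus x, inAplus y & v = tdot x y].

End Ops.

(* Let W be the span of the valid non-binary trees.  On two trees, each of
   the operations <, . and > yields a combination of valid trees which are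
   non-binary as soon as one factor is; moreover x . y is always non-binary,
   since its root merges the roots of x and y and so has at least three
   children.  Hence W is a tridendriform ideal containing the generators, so
   every tree of I is non-binary.  Conversely, by induction on the tree: if
   the root has at least three children, x0 \/ x1 \/ ... \/ xk is the
   generator (x0 \/ |) . (x1 \/ ... \/ xk); if it has two children x0 and x1,
   then x0 \/ x1 is x0 > (| \/ x1) when x0 is non-binary and (x0 \/ |) < x1
   when x1 is. *)

From Pilot Require Import Defs.
From mathcomp Require Import all_boot all_algebra finmap.
From mathcomp.multinomials Require Import monalg.

Set Implicit Arguments.
Unset Strict Implicit.
Unset Printing Implicit Defensive.

Import GRing.Theory.
Local Open Scope ring_scope.

Lemma tsize_child c ts : c \in ts -> (Defs.tsize c < Defs.tsize (Node ts))%N.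
Proof.
by case/splitPr=> s1 s2; rewrite /= map_cat sumn_cat /= ltnS addnCA leq_addr.
Qed.

Lemma tree_children_ind (P : tree -> Prop) :
  (forall ts, (forall c, c \in ts -> P c) -> P (Node ts)) -> forall t, P t.
Proof.
move=> hP t; elim: (Defs.tsize t).+1 {-2}t (ltnSn (Defs.tsize t)) => // n IH [ts] hs.
by apply: hP => c /tsize_child hc; apply: IH; apply: leq_trans hc hs.
Qed.

Definition wide_valid (s : tree) := valid_tree s && has_wide_vertex s.

Definition inherits_wide (x y s : tree) :=
  valid_tree s && ((has_wide_vertex x || has_wide_vertex y) ==> has_wide_vertex s).

Lemma wide_valid_inherits x y s : wide_valid s -> inherits_wide x y s.
Proof. by case/andP=> vs ws; rewrite /inherits_wide vs ws implybT. Qed.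

Lemma inherits_wide_valid x y s :
  has_wide_vertex x || has_wide_vertex y -> inherits_wide x y s -> wide_valid s.
Proof. by move=> wxy /andP[vs]; rewrite wxy /wide_valid vs. Qed.

Lemma valid_node_rcons xs a :
  valid_tree (Node (rcons xs a)) = [&& size xs != 0, all valid_tree xs & valid_tree a].
Proof. by rewrite /= size_rcons all_rcons [valid_tree a && _]andbC andbA. Qed.

Lemma wide_node_rcons xs a :
  has_wide_vertex (Node (rcons xs a)) =
  [|| 1 < size xs, has has_wide_vertex xs | has_wide_vertex a]%N.
Proof. by rewrite /= size_rcons has_rcons [has_wide_vertex a || _]orbC. Qed.

Lemma inherits_wide_last xs a y t :
  valid_tree (Node (rcons xs a)) -> inherits_wide a y t ->
  inherits_wide (Node (rcons xs a)) y (Node (rcons xs t)).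
Proof.
rewrite /inherits_wide !valid_node_rcons !wide_node_rcons.
case/and3P=> -> -> _ /andP[-> /implyP wt] /=; apply/implyP.
by case/orP=> [/or3P[-> | -> | wa] | wy]; rewrite ?orbT // wt ?wa ?wy ?orbT.
Qed.

Lemma inherits_wide_head x y0 ys t :
  valid_tree (Node (y0 :: ys)) -> inherits_wide x y0 t ->
  inherits_wide x (Node (y0 :: ys)) (Node (t :: ys)).
Proof.
rewrite /inherits_wide /= => /and3P[-> _ ->] /andP[-> /implyP wt] /=; apply/implyP.
by case/orP=> [wx | /or3P[-> | wy | ->]]; rewrite ?orbT // wt ?wx ?wy ?orbT.
Qed.

Lemma wide_valid_merge xs a y0 ys t :
  valid_tree (Node (rcons xs a)) -> valid_tree (Node (y0 :: ys)) -> valid_tree t ->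
  wide_valid (Node (xs ++ t :: ys)).
Proof.
rewrite valid_node_rcons /= => /and3P[sx vxs _] /and3P[sy _ vys] vt.
rewrite /wide_valid /= all_cat /= vxs vt vys size_cat /=.
by case: xs sx {vxs} => // ? ?; case: ys sy {vys} => // ? ?; rewrite !addnS.
Qed.

Section Tridendriform.
Variable K : fieldType.

Definition supported (p : pred tree) (v : TA K) := forall t, t \in msupp v -> p t.

Lemma supported0 p : supported p 0.
Proof. by move=> t; rewrite msupp0 inE. Qed.

Lemma supportedD p u v : supported p u -> supported p v -> supported p (u + v).
Proof.
by move=> hu hv t /(fsubsetP (msuppD_le _ _)); rewrite in_fsetU => /orP[/hu|/hv].
Qed.

Lemma supportedZ p c v : supported p v -> supported p (c *: v).
Proof. by move=> hv t /(fsubsetP (msuppZ_le _ _)) /hv. Qed.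

Lemma supported_sum p (I : eqType) (r : seq I) (F : I -> TA K) :
  (forall i, i \in r -> supported p (F i)) -> supported p (\sum_(i <- r) F i).
Proof.
move=> hF; rewrite big_seq.
by apply: (big_ind (supported p)); [exact: supported0 | exact: supportedD |].
Qed.

Lemma sub_supported (p q : pred tree) v :
  subpred p q -> supported p v -> supported q v.
Proof. by move=> hpq hv t /hv /hpq. Qed.

Lemma msupp_basis t : msupp (basis K t) = [fset t]%fset.
Proof. by rewrite /basis msuppU oner_eq0. Qed.

Lemma supported_basis (p : pred tree) t : supported p (basis K t) <-> p t.
Proof.
split=> [|pt s]; last by rewrite msupp_basis inE => /eqP ->.
by apply; rewrite msupp_basis inE.
Qed.

Lemma supported_lin_ext p f v :
  (forall t, t \in msupp v -> supported p (f t)) -> supported p (lin_ext f v).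
Proof. by move=> hf; apply: supported_sum => t /hf; apply: supportedZ. Qed.

Lemma supported_bilin p f u v :
  (forall s t, s \in msupp u -> t \in msupp v -> supported p (f s t)) ->
  supported p (bilin f u v).
Proof.
move=> hf; apply: supported_sum => s hs; apply: supported_sum => t ht.
exact/supportedZ/hf.
Qed.

Lemma lin_ext_basis f t : lin_ext f (basis K t) = f t.
Proof. by rewrite /lin_ext msupp_basis big_seq_fset1 /basis mcoeffUU scale1r. Qed.

Lemma bilin_basis f s t : bilin f (basis K s) (basis K t) = f s t.
Proof.
rewrite /bilin msupp_basis big_seq_fset1 msupp_basis big_seq_fset1.
by rewrite /basis !mcoeffUU mulr1 scale1r.
Qed.

Lemma inA_basis t : valid_tree t -> inA (basis K t).
Proof. exact: (proj2 (supported_basis _ _)). Qed.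

Lemma inAplus_basis t : valid_tree t -> t <> tleaf -> inAplus (basis K t).
Proof. by move=> vt nt s; rewrite msupp_basis inE => /eqP ->. Qed.

Lemma inAplus_inA (v : TA K) : inAplus v -> inA v.
Proof. by move=> hv t /hv []. Qed.

(* The product [*] local to [ops], named so that [opsE] can be stated. *)
Definition star n (a b : tree) : TA K :=
  match a, b with
  | Node [::], _ => basis K b
  | _, Node [::] => basis K a
  | _, _ => let: (p, d, s) := ops K n a b in p + d + s
  end.

Lemma star_leafl n b : star n tleaf b = basis K b.
Proof. by []. Qed.

Lemma star_leafr n a : star n a tleaf = basis K a.
Proof. by case: a => [[|? ?]]. Qed.

Lemma ops_leafl n y0 ys :
  ops K n.+1 tleaf (Node (y0 :: ys)) = (0, 0, basis K (Node (y0 :: ys))).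
Proof. by []. Qed.

Lemma ops_leafr n xs a :
  ops K n.+1 (Node (rcons xs a)) tleaf = (basis K (Node (rcons xs a)), 0, 0).
Proof. by case: xs. Qed.

Lemma opsE n xs a y0 ys :
  ops K n.+1 (Node (rcons xs a)) (Node (y0 :: ys)) =
  (lin_ext (fun t => basis K (Node (rcons xs t))) (star n a (Node (y0 :: ys))),
   lin_ext (fun t => basis K (Node (xs ++ t :: ys))) (star n a y0),
   lin_ext (fun t => basis K (Node (t :: ys))) (star n (Node (rcons xs a)) y0)).
Proof. by case: xs => [|x1 xs] //=; rewrite last_rcons belast_rcons. Qed.

Lemma tsize_add_succ x y : exists n, (Defs.tsize x + Defs.tsize y = n.+1)%N.
Proof. by case: x => xs; exists (sumn (map Defs.tsize xs) + Defs.tsize y)%N. Qed.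

Lemma tsucc_basis_graft x c :
  tsucc (basis K x) (basis K (Node [:: tleaf; c])) = basis K (Node [:: x; c]).
Proof.
rewrite /tsucc bilin_basis /tsucc_t.
have [n ->] := tsize_add_succ x (Node [:: tleaf; c]).
case: x => xs; case/lastP: xs => [|xs a]; first by rewrite ops_leafl.
by rewrite opsE (star_leafr n (Node (rcons xs a))) lin_ext_basis.
Qed.

Lemma tprec_basis_graft c y :
  tprec (basis K (Node [:: c; tleaf])) (basis K y) = basis K (Node [:: c; y]).
Proof.
rewrite /tprec bilin_basis /tprec_t.
have [n ->] := tsize_add_succ (Node [:: c; tleaf]) y.
case: y => [[|y0 ys]]; first by rewrite (ops_leafr n [:: c]).
by rewrite (opsE n [:: c]) star_leafl lin_ext_basis.
Qed.

Lemma tdot_basis_graft c y0 ys :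
  tdot (basis K (Node [:: c; tleaf])) (basis K (Node (y0 :: ys))) =
  basis K (Node [:: c, y0 & ys]).
Proof.
rewrite /tdot bilin_basis /tdot_t.
have [n ->] := tsize_add_succ (Node [:: c; tleaf]) (Node (y0 :: ys)).
by rewrite (opsE n [:: c]) !star_leafl !lin_ext_basis.
Qed.

Lemma ops_supported n x y : valid_tree x -> valid_tree y ->
  [/\ supported (inherits_wide x y) (ops K n x y).1.1,
      supported wide_valid (ops K n x y).1.2 &
      supported (inherits_wide x y) (ops K n x y).2].
Proof.
elim: n x y => [|n IH] x y vx vy; first by split; apply: supported0.
have star_supported a b : valid_tree a -> valid_tree b ->
    supported (inherits_wide a b) (star n a b).
  case: a b => [[|a1 as1]] [[|b1 bs1]] va vb.
  - by rewrite star_leafl; apply/supported_basis.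
  - rewrite star_leafl; apply/supported_basis.
    by rewrite /inherits_wide vb implybb.
  - rewrite star_leafr; apply/supported_basis.
    by rewrite /inherits_wide va orbF implybb.
  have [] := IH (Node (a1 :: as1)) (Node (b1 :: bs1)) va vb.
  rewrite /star; case: ops => [[p d] s] /= hp hd hs.
  apply: supportedD; [apply: supportedD|] => //.
  by apply: sub_supported hd; apply: wide_valid_inherits.
(* keeps [ops K n.+1] from being unfolded by the case analysis *)
set o := ops K n.+1.
case: x y vx vy => [xs] [ys]; case/lastP: xs => [|xs a]; case: ys => [|y0 ys] vx vy.
- by split; apply: supported0.
- rewrite /o ops_leafl; split; try exact: supported0.
  by apply/supported_basis; rewrite /inherits_wide vy implybb.
- rewrite /o ops_leafr; split; try exact: supported0.
  by apply/supported_basis; rewrite /inherits_wide vx orbF implybb.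
have := vx; rewrite valid_node_rcons => /and3P[_ _ va].
have /= /and3P[_ vy0 _] := vy.
rewrite /o opsE; split; apply: supported_lin_ext => t.
- by move/(star_supported _ _ va vy)=> ht; apply/supported_basis/inherits_wide_last.
- case/(star_supported _ _ va vy0)/andP=> vt _.
  exact/supported_basis/(wide_valid_merge vx vy vt).
- by move/(star_supported _ _ vx vy0)=> ht; apply/supported_basis/inherits_wide_head.
Qed.

Lemma tprec_t_supported s t : valid_tree s -> valid_tree t ->
  supported (inherits_wide s t) (tprec_t K s t).
Proof.
by move=> vs vt; have [] := ops_supported (Defs.tsize s + Defs.tsize t) vs vt.
Qed.

Lemma tdot_t_supported s t : valid_tree s -> valid_tree t ->
  supported wide_valid (tdot_t K s t).
Proof.
by move=> vs vt; have [] := ops_supported (Defs.tsize s + Defs.tsize t) vs vt.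
Qed.

Lemma tsucc_t_supported s t : valid_tree s -> valid_tree t ->
  supported (inherits_wide s t) (tsucc_t K s t).
Proof.
by move=> vs vt; have [] := ops_supported (Defs.tsize s + Defs.tsize t) vs vt.
Qed.

Lemma bilin_wide_valid (f : tree -> tree -> TA K) u v :
  (forall s t, valid_tree s -> valid_tree t -> supported (inherits_wide s t) (f s t)) ->
  inA u -> inA v -> supported wide_valid u \/ supported wide_valid v ->
  supported wide_valid (bilin f u v).
Proof.
move=> hf hu hv huv; apply: supported_bilin => s t hs ht.
have wst : has_wide_vertex s || has_wide_vertex t.
  by case: huv => [/(_ s hs) | /(_ t ht)] /andP[_ ->]; rewrite ?orbT.
by apply: sub_supported (hf s t (hu s hs) (hv t ht)) => r; apply: inherits_wide_valid.
Qed.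

Lemma tprec_wide_valid (u v : TA K) : inA u -> inA v ->
  supported wide_valid u \/ supported wide_valid v -> supported wide_valid (tprec u v).
Proof. exact/bilin_wide_valid/tprec_t_supported. Qed.

Lemma tsucc_wide_valid (u v : TA K) : inA u -> inA v ->
  supported wide_valid u \/ supported wide_valid v -> supported wide_valid (tsucc u v).
Proof. exact/bilin_wide_valid/tsucc_t_supported. Qed.

Lemma tdot_wide_valid (u v : TA K) : inA u -> inA v -> supported wide_valid (tdot u v).
Proof.
by move=> hu hv; apply: supported_bilin => s t /hu vs /hv vt; apply: tdot_t_supported.
Qed.

Lemma wide_valid_inA (v : TA K) : supported wide_valid v -> inA v.
Proof. by apply: sub_supported => s /andP[]. Qed.

Lemma tridend_ideal_wide : tridend_ideal (supported wide_valid).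
Proof.
split; [exact: wide_valid_inA | exact: supported0 | exact: supportedD
       | exact: supportedZ |].
move=> x y wx vy; have vx := wide_valid_inA wx.
split; first split.
- exact: tprec_wide_valid vx vy (or_introl wx).
- exact: tdot_wide_valid.
- exact: tsucc_wide_valid vx vy (or_introl wx).
- exact: tprec_wide_valid vy vx (or_intror wx).
- exact: tdot_wide_valid.
- exact: tsucc_wide_valid vy vx (or_intror wx).
Qed.

Lemma dot_gens_wide_valid (s : TA K) : dot_gens s -> supported wide_valid s.
Proof.
by case=> [x [y [/inAplus_inA hx /inAplus_inA hy ->]]]; apply: tdot_wide_valid.
Qed.

Lemma wide_basis_in_ideal (J : TA K -> Prop) :
  tridend_ideal J -> (forall s, dot_gens s -> J s) ->
  forall t, valid_tree t -> has_wide_vertex t -> J (basis K t).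
Proof.
move=> [_ _ _ _ hmul] hgen; elim/tree_children_ind=> ts IH.
case: ts IH => [|c0 [|c1 [|c2 cs]]] //= IH.
- case/and3P=> v0 v1 _ /or3P[w0 | w1 | //].
  + have A1 : inA (basis K (Node [:: tleaf; c1])) by apply: inA_basis; rewrite /= v1.
    have [[_ _ ? _ _] _] := hmul _ _ (IH c0 (mem_head _ _) v0 w0) A1.
    by rewrite -tsucc_basis_graft.
  + have A0 : inA (basis K (Node [:: c0; tleaf])) by apply: inA_basis; rewrite /= v0.
    have [[_ _ _ ? _] _] := hmul _ _ (IH c1 (mem_last c0 [:: c1]) v1 w1) A0.
    by rewrite -tprec_basis_graft.
- move=> /andP[v0 vcs] _; apply: hgen.
  exists (basis K (Node [:: c0; tleaf])), (basis K (Node [:: c1, c2 & cs])).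
  split; last by rewrite tdot_basis_graft.
  + by apply: inAplus_basis; rewrite /= ?v0.
  + by apply: inAplus_basis; rewrite /= ?vcs.
Qed.

End Tridendriform.

Theorem mainTheorem18 (K : fieldType) (t : tree) :
  valid_tree t ->
  (has_wide_vertex t <-> in_gen_ideal (@dot_gens K) (basis K t)).
Proof.
move=> vt; split=> [wt J hJ hgen | ht].
- exact: wide_basis_in_ideal hJ hgen t vt wt.
- have := ht _ (tridend_ideal_wide K) (@dot_gens_wide_valid K).
  by move/supported_basis/andP=> [].
Qed.
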